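(* Let $V$ be a real vector space with a $\sigma$-algebra $\mathcal{B}$ for which every finite-dimensional hyperplane $H=x+T:=\{x+u:u\in T\}$ ($x\in V$, $T$ a finite-dimensional vector subspace) is measurable. Let $Q$ be a probability measure on $\mathcal{B}$ and for $j=0,1,2,\dots$ let $\mathcal{H}_j$ be the collection of all $j$-dimensional hyperplanes in $V$. Then for each $j=0,1,2,\dots$, for any infinite sequence $\{C_i\}$ of distinct hyperplanes in $\mathcal{H}_j$ such that $Q(C_i)$ converges, its limit equals $Q(F)$ for some hyperplane $F$ of dimension less than $j$ such that $F\subset C_i$ for infinitely many $i$. In particular, $Q(C_i)$ cannot be strictly increasing. The same statements hold with finite-dimensional vector subspaces in place of hyperplanes.
   Context: Hyperplanes of dimension $0$ are singletons $\{x\}$; the empty set $\emptyset$ is considered a hyperplane of dimension $-1$. *)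

From HB Require Import structures.
From mathcomp Require Import all_boot all_order all_algebra.
From mathcomp Require Import all_classical all_reals.
From mathcomp Require Import topology normedtype sequences measure.
Set Implicit Arguments. Unset Strict Implicit. Unset Printing Implicit Defensive.
Import Order.TTheory GRing.Theory Num.Theory.
Import numFieldNormedType.Exports.
Local Open Scope classical_set_scope.
Local Open Scope ring_scope.

Definition subspace_dim (R : realType) (V : lmodType R) (j : nat) (T : set V) :=
  exists v : 'I_j -> V,
    (forall c : 'I_j -> R, \sum_(i < j) c i *: v i = 0 -> forall i, c i = 0) /\
    T = [set \sum_(i < j) c i *: v i | c in [set: 'I_j -> R]].

Definition hyperplane_dim (R : realType) (V : lmodType R) (j : nat) (H : set V) :=
  exists (x : V) (T : set V), subspace_dim j T /\ H = [set x + u | u in T].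

(* Hyperplane of dimension < j, where the empty set counts as the
   hyperplane of dimension -1. *)
Definition hyperplane_dim_lt (R : realType) (V : lmodType R) (j : nat) (F : set V) :=
  F = set0 \/ exists k, (k < j)%N /\ hyperplane_dim k F.

Definition subspace_dim_lt (R : realType) (V : lmodType R) (j : nat) (F : set V) :=
  exists k, (k < j)%N /\ subspace_dim k F.

Definition probability_on (R : realType) (V : Type) (B : set (set V))
    (Q : set V -> R) :=
  [/\ sigma_algebra setT B,
      forall A, B A -> 0 <= Q A,
      Q set0 = 0,
      Q setT = 1 &
      forall F : nat -> set V, (forall n, B (F n)) -> trivIset setT F ->
        (fun n => \sum_(k < n) Q (F k)) @ \oo --> Q (\bigcup_k F k)].

Definition infinitely_often (P : nat -> Prop) := forall N, exists i, (N <= i)%N /\ P i.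

(* Both families (affine flats, ranked by dimension + 1, and linear subspaces)
   are closed under intersection and their rank strictly increases along proper
   inclusions, and Q is a bounded finitely additive content; nothing else is used.
   Key claim, by induction on j: if the C_i have rank <= j, no set repeats
   infinitely often, and Q (C_i) >= a for all i, then some set of rank < j lying
   in infinitely many C_i has content >= a.  Pass to a subsequence D whose
   intersection J contains, up to Q-null sets, every set lying in infinitely many
   D_i.  Under nu := Q (_ minus J) the overlaps nu (D_i & D_k) then vanish as i
   grows, by the induction hypothesis applied to the lower-rank sets D_i & D_k;
   since a bounded content cannot give mass a - Q J > 0 to infinitely many almost
   disjoint sets, Q J >= a.  Taking a = l - e and descending once more in rank,
   the supremum of Q over the sets of rank < j inside infinitely many C_i is
   attained, and it equals the limit l.  A strictly increasing Q (C_i) would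
   converge to its supremum, which no subset of a single C_i can reach. *)

From HB Require Import structures.
From mathcomp Require Import all_boot all_order all_algebra.
From mathcomp Require Import all_classical all_reals.
From mathcomp Require Import topology normedtype sequences measure.
From mathcomp Require Import interval_inference zify lra.
Import Order.TTheory GRing.Theory Num.Theory.
Import numFieldNormedType.Exports.
Local Open Scope classical_set_scope.
Local Open Scope ring_scope.

Definition is_content {R : realType} {T : Type} (B : set (set T)) (mu : set T -> R) :=
  (forall A, B A -> 0 <= mu A) /\
  (forall A C, B A -> B C -> A `&` C = set0 -> mu (A `|` C) = mu A + mu C).

Lemma eventually_invS_le {R : realType} {e : R} : 0 < e ->
  exists M, forall n, (M <= n)%N -> n.+1%:R^-1 <= e.
Proof.
move=> e_gt0; have [M _ hM] := near_infty_natSinv_lt (PosNum e_gt0).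
by exists M => n Mn; exact/ltW/hM.
Qed.

Section Content.
Context {R : realType} {T : Type} {B : set (set T)} {mu : set T -> R}.
Hypotheses (ringB : setring B) (mu_content : is_content B mu).

Let B_set0 : B set0. Proof. by case: ringB. Qed.
Let B_setU {X Y} : B X -> B Y -> B (X `|` Y). Proof. by case: ringB => _ + _; apply. Qed.
Let B_setD {X Y} : B X -> B Y -> B (X `\` Y). Proof. by case: ringB => _ _; apply. Qed.
Let B_setI {X Y} : B X -> B Y -> B (X `&` Y).
Proof. by have [+ _] := (setD_closedP B).1 (fun _ _ => B_setD); apply. Qed.

Lemma content_ge0 {A} : B A -> 0 <= mu A.
Proof. by case: mu_content => + _; apply. Qed.

Lemma content_set0 : mu set0 = 0.
Proof.
case: mu_content => _ /(_ set0 set0 B_set0 B_set0 (setI0 _)); rewrite setU0 => e.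
by apply: (@addrI _ (mu set0)); rewrite addr0 -e.
Qed.

Lemma content_setID {A U} : B A -> B U -> mu A = mu (A `&` U) + mu (A `\` U).
Proof.
move=> BA BU; case: mu_content => _ add.
rewrite -add ?setUIDK //; [exact: B_setI | exact: B_setD |].
by rewrite setDE setIACA setICr setI0.
Qed.

Lemma content_le {A C} : B A -> B C -> A `<=` C -> mu A <= mu C.
Proof.
move=> BA BC AsubC; rewrite (content_setID BC BA) (setIidr AsubC) lerDl.
exact/content_ge0/B_setD.
Qed.

Lemma content_setU_le {A C} : B A -> B C -> mu (A `|` C) <= mu A + mu C.
Proof.
move=> BA BC; rewrite (content_setID (B_setU BA BC) BA) setUK lerD2l.
apply: content_le => //; first exact/B_setD/BA/B_setU.
by move=> x [[]].
Qed.

Lemma content_bigsetU_le n (F : nat -> set T) : (forall k, B (F k)) ->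
  mu (\big[setU/set0]_(k < n) F k) <= \sum_(k < n) mu (F k).
Proof.
move=> BF; elim: n => [|n IHn]; first by rewrite !big_ord0 content_set0.
rewrite !big_ord_recr /=; apply: le_trans (content_setU_le _ _) _ => //.
- by elim/big_ind: _ => // *; exact: B_setU.
- exact: lerD.
Qed.

Lemma content_setD {J} : B J -> is_content B (fun A => mu (A `\` J)).
Proof.
move=> BJ; split=> [A BA|A C BA BC AC0]; first exact/content_ge0/B_setD.
rewrite setDUl; case: mu_content => _; apply; try exact: B_setD.
by rewrite setDE setDE setIACA AC0 set0I.
Qed.

Hypothesis BT : B setT.

Lemma content_overlaps_not_vanishing (C : nat -> set T) a :
  (forall i, B (C i)) -> 0 < a -> (forall i, a <= mu (C i)) ->
  ~ (forall k eta, 0 < eta -> exists I, forall i, (I <= i)%N -> mu (C i `&` C k) < eta).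
Proof.
move=> BC a_gt0 Ca overlaps.
have uniform n eta : 0 < eta ->
    exists I, forall i, (I <= i)%N -> forall k, (k < n)%N -> mu (C i `&` C k) < eta.
  move=> eta_gt0; elim: n => [|n [I1 h1]]; first by exists 0%N.
  have [I2 h2] := overlaps n eta eta_gt0.
  exists (maxn I1 I2) => i /[!geq_max] /andP[iI1 iI2] k; rewrite ltnS leq_eqVlt.
  by case/orP => [/eqP -> | ]; [exact: h2 | exact: h1].
(* Once mu (U N) is within a/2 of sup_n mu (U n), every C i has content less
   than a/2 outside U N, and the late ones also less than a/2 inside U N. *)
pose U n := \big[setU/set0]_(k < n) C k.
have BUn n : B (U n) by rewrite /U; elim/big_ind: _ => // *; exact: B_setU.
have supE : has_sup (range (mu \o U)).
  split; first by exists (mu (U 0%N)), 0%N.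
  by exists (mu setT) => _ [n _ <-]; apply: content_le.
have [_ [N _ <-] supN] := sup_adherent (divr_gt0 a_gt0 (ltr0n R 2)) supE.
have outside i : mu (C i `\` U N) < a / 2.
  have UNCi : U N `|` C i `<=` U (maxn N i.+1).
    rewrite subUset; split; first exact/subset_bigsetU/leq_maxl.
    exact/bigsetU_sup/leq_maxr.
  have := content_le (B_setU (BUn N) (BC i)) (BUn _) UNCi.
  rewrite (content_setID (B_setU (BUn N) (BC i)) (BUn N)) setUK setDUl setDv set0U.
  move/le_trans/(_ (sup_upper_bound supE (ex_intro2 _ _ (maxn N i.+1) I erefl))).
  by move: supN => /=; lra.
pose eta := a / 2 / N.+1%:R.
have eta_gt0 : 0 < eta by rewrite !divr_gt0.
have [i0 hi0] := uniform N eta eta_gt0.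
have sum_eta : \sum_(k < N) eta <= a / 2.
  rewrite sumr_const card_ord -[eta *+ N]mulr_natr /eta mulrAC ler_pdivrMr ?ltr0n //.
  by rewrite ler_pM2l ?ler_nat // divr_gt0.
have inside : mu (C i0 `&` U N) <= a / 2.
  rewrite /U big_distrr /=.
  apply: le_trans (content_bigsetU_le N _ (fun k => B_setI (BC i0) (BC k))) _.
  by apply: le_trans sum_eta; apply: ler_sum => k _; apply/ltW/hi0.
by have := Ca i0; rewrite (content_setID (BC i0) (BUn N)); have := outside i0; lra.
Qed.

End Content.

Section Subsequences.
Context {T : Type}.

Definition finite_fibers (C : nat -> T) :=
  forall X, exists N, forall i, (N <= i)%N -> C i <> X.

Lemma injective_finite_fibers {C : nat -> T} : injective C -> finite_fibers C.
Proof.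
move=> injC X; have [[i0 <-]|notC] := pselect (exists i, C i = X).
  by exists i0.+1 => i /[swap] /injC ->; rewrite ltnn.
by exists 0%N => i _ CiX; apply: notC; exists i.
Qed.

Lemma repeated_value_or_finite_fibers (C : nat -> T) :
  (exists X, infinitely_often (fun i => C i = X)) \/ finite_fibers C.
Proof.
have [|norep] := pselect (exists X, infinitely_often (fun i => C i = X)); first by left.
right => X; apply: contrapT => noN; apply: norep; exists X => N.
by apply: contrapT => noi; apply: noN; exists N => i Ni CiX; apply: noi; exists i.
Qed.

Lemma incr_geq_id (psi : nat -> nat) : {homo psi : n m / (n < m)%N} ->
  forall n, (n <= psi n)%N.
Proof. by move=> incr; elim=> // n IHn; exact: leq_ltn_trans IHn (incr _ _ (ltnSn n)). Qed.

Lemma addn_incr N : {homo addn^~ N : n m / (n < m)%N}.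
Proof. by move=> n m; rewrite ltn_add2r. Qed.

Lemma infinitely_often_subseq {P : nat -> Prop} : infinitely_often P ->
  exists psi : nat -> nat, {homo psi : n m / (n < m)%N} /\ forall n, P (psi n).
Proof.
move=> ioP; have /choice[next nextP] : forall N, exists i, (N <= i)%N /\ P i := ioP.
pose psi n := iter n (fun m => next m.+1) (next 0%N).
exists psi; split; last by case=> [|n]; [case: (nextP 0%N) | case: (nextP (psi n).+1)].
by apply: homo_ltn => [? ? ?|n]; [exact: ltn_trans | case: (nextP (psi n).+1)].
Qed.

Context {psi : nat -> nat}.
Hypothesis psi_incr : {homo psi : n m / (n < m)%N}.

Lemma infinitely_often_comp {P : nat -> Prop} :
  infinitely_often (P \o psi) -> infinitely_often P.
Proof.
move=> ioP N; have [n [Nn Pn]] := ioP N.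
by exists (psi n); split=> //; rewrite (leq_trans Nn) ?incr_geq_id.
Qed.

Lemma finite_fibers_comp {C : nat -> T} : finite_fibers C -> finite_fibers (C \o psi).
Proof.
move=> fC X; have [N hN] := fC X; exists N => i Ni.
by apply: hN; rewrite (leq_trans Ni) ?incr_geq_id.
Qed.

End Subsequences.

Section Rank.
Context {R : realType} {T : Type} {B G : set (set T)} {rk : set T -> nat}.
Hypothesis ringB : setring B.
Hypothesis BT : B setT.
Hypothesis GB : forall {X}, G X -> B X.
Hypothesis GI : forall {X Y}, G X -> G Y -> G (X `&` Y).
Hypothesis rk_lt : forall {X Y}, G X -> G Y -> X `<=` Y -> X <> Y -> (rk X < rk Y)%N.

Lemma rank_le {X Y} : G X -> G Y -> X `<=` Y -> (rk X <= rk Y)%N.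
Proof.
move=> GX GY XY; have [->//|XneY] := pselect (X = Y).
exact/ltnW/rk_lt.
Qed.

Lemma rank_setI_lt {X Y j} : G X -> G Y -> (rk X <= j)%N -> (rk Y <= j)%N -> X <> Y ->
  (rk (X `&` Y) < j)%N.
Proof.
move=> GX GY rkX rkY XneY; have [XY|XYneX] := pselect (X `&` Y = X).
  have XsubY : X `<=` Y by rewrite -XY; exact: subIsetr.
  by rewrite XY (leq_trans (rk_lt GX GY XsubY XneY)).
by rewrite (leq_trans (rk_lt (GI GX GY) GX (@subIsetl _ X Y) XYneX)).
Qed.

Lemma G_bigcap {C : nat -> set T} : (forall i, G (C i)) -> G (\bigcap_i C i).
Proof.
move=> GC; pose K n := \bigcap_(i < n.+1) C i.
have GK n : G (K n).
  elim: n => [|n IHn]; first by rewrite /K bigcap_mkord big_ord_recr big_ord0 /= setTI.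
  by rewrite /K bigcap_mkord big_ord_recr -bigcap_mkord /=; exact: GI.
have K_mono n m : (n <= m)%N -> K m `<=` K n.
  by move=> nm x Kmx i /= ilt; apply: Kmx; rewrite /= (leq_trans ilt).
have ex_rank : exists r, `[< exists n, rk (K n) = r >].
  by exists (rk (K 0%N)); apply/asboolP; exists 0%N.
case: (ex_minnP ex_rank) => _ /asboolP [n <-] rmin.
have K_const m : (n <= m)%N -> K m = K n.
  move=> nm; apply: contrapT => Kmn.
  have := rmin (rk (K m)) (asboolT (ex_intro _ m erefl)).
  by rewrite leqNgt (rk_lt (GK m) (GK n) (K_mono _ _ nm) Kmn).
suff -> : \bigcap_i C i = K n by [].
apply/seteqP; split=> [x Cx i _|x Knx i _]; first exact: Cx.
by rewrite -(K_const (maxn n i)) ?leq_maxl // in Knx; apply: Knx; rewrite /= ltnS leq_maxr.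
Qed.

Lemma rank_lt_of_io_subset {j} {C : nat -> set T} {X : set T} :
  (forall i, G (C i)) -> (forall i, (rk (C i) <= j)%N) -> finite_fibers C ->
  G X -> infinitely_often (fun i => X `<=` C i) -> (rk X < j)%N.
Proof.
move=> GC rkC fC GX ioX; have [i [_ XCi]] := ioX 0%N.
have [N CneCi] := fC (C i); have [i' [Ni' XCi']] := ioX N.
apply: (@leq_ltn_trans (rk (C i `&` C i'))).
  by apply: rank_le => //; [exact: GI | by move=> x Xx; split; [exact: XCi | exact: XCi']].
by apply: rank_setI_lt => //; exact/nesym/CneCi.
Qed.

Definition saturated (mu : set T -> R) (C : nat -> set T) :=
  forall H, G H -> infinitely_often (fun i => H `<=` C i) -> mu (H `\` \bigcap_i C i) <= 0.

Lemma exists_saturated_subseq {j mu} {C : nat -> set T} : is_content B mu ->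
  (forall i, G (C i)) -> (forall i, (rk (C i) <= j)%N) -> finite_fibers C ->
  exists psi, {homo psi : n m / (n < m)%N} /\ saturated mu (C \o psi).
Proof.
(* Refining to a subsequence inside a set H that escapes the common intersection
   strictly enlarges that intersection, whose rank stays below j. *)
move=> mu_content; have [m] := ubnP (j - rk (\bigcap_i C i)).
elim: m C => [//|m IHm] C jm GC rkC fC.
have [sat|unsat] := pselect (saturated mu C); first by exists id; split.
set J := \bigcap_i C i in jm.
have [H [GH ioH HJ]] : exists H, [/\ G H, infinitely_often (fun i => H `<=` C i)
                                  & 0 < mu (H `\` J)].
  apply: contrapT => noH; apply: unsat => H GH ioH; rewrite leNgt; apply/negP => HJ.
  by apply: noH; exists H.
have [phi [phi_incr HC]] := infinitely_often_subseq ioH.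
set W := \bigcap_n C (phi n).
have GW : G W by apply: G_bigcap => n; exact: GC.
have rkW : (rk W < j)%N.
  apply: (@rank_lt_of_io_subset j (C \o phi)) => [i|i|||].
  - exact: GC.
  - exact: rkC.
  - exact: (finite_fibers_comp phi_incr fC).
  - exact: GW.
  - by move=> N; exists N; split=> // x Wx; exact: Wx.
have JW : J `<=` W by move=> x Jx n _; exact: Jx.
have JneW : J <> W.
  move=> JW'; have HJ0 : H `\` J = set0.
    by rewrite setD_eq0 JW' => x Hx n _; exact: HC.
  by move: HJ; rewrite HJ0 (content_set0 ringB mu_content) ltxx.
have rkJW : (rk J < rk W)%N := rk_lt (G_bigcap GC) GW JW JneW.
have jW : (j - rk W < m)%N by lia.
have [psi [psi_incr sat]] :=
  IHm (C \o phi) jW (fun n => GC _) (fun n => rkC _) (finite_fibers_comp phi_incr fC).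
by exists (phi \o psi); split=> // n1 n2 n12; exact/phi_incr/psi_incr.
Qed.

Definition lower_bound_descends j := forall (mu : set T -> R) (C : nat -> set T) a,
  is_content B mu -> (forall i, G (C i)) -> (forall i, (rk (C i) <= j)%N) ->
  finite_fibers C -> (forall i, a <= mu (C i)) ->
  exists X, [/\ G X, (rk X < j)%N, infinitely_often (fun i => X `<=` C i) & a <= mu X].

Lemma saturated_overlaps_vanish {j mu} {D : nat -> set T} :
  (forall j', (j' < j)%N -> lower_bound_descends j') -> is_content B mu ->
  (forall i, G (D i)) -> (forall i, (rk (D i) <= j)%N) -> finite_fibers D ->
  saturated mu D -> forall k eta, 0 < eta ->
  exists I, forall i, (I <= i)%N -> mu (D i `&` D k `\` \bigcap_n D n) < eta.
Proof.
move=> IH mu_content GD rkD fD sat k eta eta_gt0.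
set J := \bigcap_n D n; pose nu A := mu (A `\` J).
have nu_content : is_content B nu := content_setD ringB mu_content (GB (G_bigcap GD)).
apply: contrapT => never.
have ioE : infinitely_often (fun i => eta <= nu (D i `&` D k) /\ D i <> D k).
  move=> N; have [Nk DneDk] := fD (D k).
  apply: contrapT => none; apply: never; exists (maxn N Nk) => i.
  rewrite geq_max => /andP[Ni Nki]; rewrite ltNge; apply/negP => le_eta.
  by apply: none; exists i; split=> //; split=> //; exact: DneDk.
have [phi [phi_incr Ephi]] := infinitely_often_subseq ioE.
pose E n := D (phi n) `&` D k.
have GE n : G (E n) := GI (GD _) (GD k).
have rkE n : (rk (E n) < j)%N := rank_setI_lt (GD _) (GD k) (rkD _) (rkD k) (Ephi n).2.
suff [X [GX ioX etaX]] :
    exists X, [/\ G X, infinitely_often (fun n => X `<=` E n) & eta <= nu X].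
  have ioDX : infinitely_often (fun i => X `<=` D i).
    apply: (infinitely_often_comp phi_incr) => N.
    by have [n [Nn XE]] := ioX N; exists n; split=> // x /XE [].
  by have := sat X GX ioDX; rewrite /nu in etaX; lra.
have [[X ioX]|fE] := repeated_value_or_finite_fibers E.
  have [n0 [_ En0]] := ioX 0%N; exists X; split; first by rewrite -En0.
    by move=> N; have [n [Nn EnX]] := ioX N; exists n; split=> //; rewrite EnX.
  by rewrite -En0; exact: (Ephi n0).1.
have [j' jj'] : exists j', j = j'.+1 by exists j.-1; rewrite prednK // (leq_ltn_trans _ (rkE 0%N)).
have rkE' n : (rk (E n) <= j')%N by rewrite -ltnS -jj'.
have j'j : (j' < j)%N by rewrite jj'.
have [X [GX _ ioX etaX]] := IH j' j'j nu E eta nu_content GE rkE' fE (fun n => (Ephi n).1).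
by exists X.
Qed.

Lemma descend_lower_bound {j} : lower_bound_descends j.
Proof.
(* On a saturated subsequence D with J := \bigcap_n D n, the sets D i have
   nu-content at least a - mu J but vanishing nu-overlaps, nu := mu (_ `\` J). *)
elim/ltn_ind: j => j IH mu C a mu_content GC rkC fC Ca.
have [psi [psi_incr sat]] := exists_saturated_subseq mu_content GC rkC fC.
set D := C \o psi; set J := \bigcap_n D n.
have GJ : G J := G_bigcap (fun n => GC _).
have JD n : J `<=` D n by move=> x Jx; exact: Jx.
have ioJ : infinitely_often (fun i => J `<=` C i).
  by apply: (infinitely_often_comp psi_incr) => N; exists N; split=> //; exact: JD.
exists J; split=> //; first exact: (rank_lt_of_io_subset GC rkC fC GJ ioJ).
rewrite leNgt; apply/negP => Ja.
have nu_content := content_setD ringB mu_content (GB GJ).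
apply: (content_overlaps_not_vanishing ringB nu_content BT D (a - mu J)).
- by move=> i; exact/GB/GC.
- by rewrite subr_gt0.
- move=> i; have := Ca (psi i).
  by rewrite (content_setID ringB mu_content (GB (GC (psi i))) (GB GJ)) (setIidr (JD i)); lra.
- exact: (saturated_overlaps_vanish IH mu_content (fun n => GC _) (fun n => rkC _)
    (finite_fibers_comp psi_incr fC) sat).
Qed.

Lemma sup_attained (P : set T -> Prop) (mu : set T -> R) l r : is_content B mu ->
  (forall X Y, G X -> P X -> G Y -> Y `<=` X -> P Y) ->
  (forall e, 0 < e -> exists X, [/\ G X, P X, (rk X <= r)%N & l - e <= mu X]) ->
  exists X, [/\ G X, P X & l <= mu X].
Proof.
(* Approximants of rank <= r either repeat one set infinitely often, which then
   attains l, or have finite fibres, and descend_lower_bound trades them for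
   approximants of rank < r. *)
move=> mu_content Pdown; elim/ltn_ind: r => r IH approx.
have /choice[Y Yn] : forall n,
    exists X, [/\ G X, P X, (rk X <= r)%N & l - n.+1%:R^-1 <= mu X].
  by move=> n; apply: approx; rewrite invr_gt0 ltr0n.
have GY n : G (Y n) by have [] := Yn n.
have rkY n : (rk (Y n) <= r)%N by have [] := Yn n.
have [[X ioX]|fY] := repeated_value_or_finite_fibers Y.
  have [n0 [_ Yn0]] := ioX 0%N; subst X; have [_ PY _ _] := Yn n0.
  exists (Y n0); split=> //; apply/ler_addgt0Pr => e e_gt0.
  have [M Me] := eventually_invS_le e_gt0; have [n [Mn YnY]] := ioX M.
  have [_ _ _] := Yn n; rewrite YnY; have := Me n Mn; set t := n.+1%:R^-1; lra.
have lower e : 0 < e -> exists X, [/\ G X, P X, (rk X < r)%N & l - e <= mu X].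
  move=> e_gt0; have [M Me] := eventually_invS_le e_gt0.
  have lowY n : l - e <= mu (Y (n + M)).
    have [_ _ _] := Yn (n + M); have := Me (n + M) (leq_addl _ _).
    by set t := (n + M).+1%:R^-1; lra.
  have [X [GX rkX ioX lX]] := descend_lower_bound _ _ _ mu_content (fun n => GY (n + M))
    (fun n => rkY (n + M)) (finite_fibers_comp (addn_incr M) fY) lowY.
  exists X; split=> //; have [n [_ XY]] := ioX 0%N.
  by have [_ PY _ _] := Yn (n + M); exact: Pdown (GY _) PY GX XY.
have r_gt0 : (0 < r)%N by have [X [_ _ rkX _]] := lower 1 ltr01; exact: leq_ltn_trans rkX.
apply: (IH r.-1); first by rewrite ltn_predL.
by move=> e /lower[X [GX PX rkX lX]]; exists X; split; rewrite // -ltnS prednK.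
Qed.

Lemma cvg_content_attained {j} {mu : set T -> R} {C : nat -> set T} {l} :
  is_content B mu -> (forall i, G (C i)) -> (forall i, (rk (C i) <= j)%N) ->
  injective C -> (fun i => mu (C i)) @ \oo --> l ->
  exists X, [/\ G X, (rk X < j)%N, infinitely_often (fun i => X `<=` C i) & l = mu X].
Proof.
move=> mu_content GC rkC injC mu_cvg.
have fC := injective_finite_fibers injC.
have near_l e : 0 < e -> exists N, forall i, (N <= i)%N -> `|l - mu (C i)| < e.
  by move=> e_gt0; have [N _ hN] := (cvgrPdist_lt _ _).1 mu_cvg e e_gt0; exists N.
pose P X := (rk X < j)%N /\ infinitely_often (fun i => X `<=` C i).
have [X [GX [rkX ioX] lX]] : exists X, [/\ G X, P X & l <= mu X].
  apply: (@sup_attained P mu l j mu_content).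
    move=> X Y GX [rkX ioX] GY YX; split; first exact: leq_ltn_trans (rank_le GY GX YX) rkX.
    by move=> N; have [i [Ni XCi]] := ioX N; exists i; split=> //; exact: subset_trans XCi.
  move=> e /near_l[N hN].
  have lowC i : l - e <= mu (C (i + N)).
    by have := hN (i + N) (leq_addl _ _); rewrite ltr_norml; lra.
  have [X [GX rkX ioX lX]] := descend_lower_bound _ _ _ mu_content (fun i => GC (i + N))
    (fun i => rkC (i + N)) (finite_fibers_comp (addn_incr N) fC) lowC.
  exists X; split=> //; last exact: ltnW.
  by split=> //; exact: (infinitely_often_comp (addn_incr N)).
exists X; split=> //; apply/eqP; rewrite eq_le lX /=; apply/ler_addgt0Pr => e /near_l[N hN].
have [i [Ni XCi]] := ioX N.
have := content_le ringB mu_content (GB GX) (GB (GC i)) XCi.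
by have := hN i Ni; rewrite ltr_norml; lra.
Qed.

Lemma content_not_strictly_increasing {j} {mu : set T -> R} {C : nat -> set T} :
  is_content B mu -> (forall i, G (C i)) -> (forall i, (rk (C i) <= j)%N) ->
  injective C -> ~ (forall i, mu (C i) < mu (C i.+1)).
Proof.
move=> mu_content GC rkC injC incr.
have mu_mono : {homo (fun i => mu (C i)) : n m / (n <= m)%N >-> n <= m}.
  by apply: homo_leq => [x|y x z|i]; [exact: lexx | exact: le_trans | exact: ltW].
have mu_ub : has_ubound (range (fun i => mu (C i))).
  exists (mu setT) => _ [i _ <-].
  exact: (content_le ringB mu_content (GB (GC i)) BT (subsetT _)).
have [X [GX _ ioX supX]] :=
  cvg_content_attained mu_content GC rkC injC (nondecreasing_cvgn mu_mono mu_ub).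
have [i [_ XCi]] := ioX 0%N.
have := content_le ringB mu_content (GB GX) (GB (GC i)) XCi.
have : mu (C i.+1) <= sup (range (fun i => mu (C i))) by apply: ub_le_sup => //; exists i.+1.
by have := incr i; rewrite -supX; lra.
Qed.

End Rank.

Section Flats.
Context {R : realType} {V : lmodType R}.

Definition span {k} (v : 'I_k -> V) : set V :=
  [set \sum_(i < k) c i *: v i | c in [set: 'I_k -> R]].

Definition indep {k} (v : 'I_k -> V) :=
  forall c : 'I_k -> R, \sum_(i < k) c i *: v i = 0 -> forall i, c i = 0.

Definition translate (x : V) (S : set V) := [set x + u | u in S].

Section Span.
Context {k : nat} (v : 'I_k -> V).

Lemma span0 : span v 0.
Proof. by exists (fun _ => 0) => //; rewrite big1 // => i _; rewrite scale0r. Qed.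

Lemma spanD x y : span v x -> span v y -> span v (x + y).
Proof.
case=> c _ <- [d _ <-]; exists (fun i => c i + d i) => //.
by rewrite -big_split; apply: eq_bigr => i _; rewrite scalerDl.
Qed.

Lemma spanZ a x : span v x -> span v (a *: x).
Proof.
case=> c _ <-; exists (fun i => a * c i) => //.
by rewrite scaler_sumr; apply: eq_bigr => i _; rewrite scalerA.
Qed.

Lemma spanB x y : span v x -> span v y -> span v (x - y).
Proof. by move=> vx vy; apply: spanD => //; rewrite -scaleN1r; exact: spanZ. Qed.

Lemma span_gen i : span v (v i).
Proof.
exists (fun l => (l == i)%:R) => //.
rewrite (bigD1 i) //= eqxx scale1r big1 ?addr0 // => l /negbTE ->.
by rewrite scale0r.
Qed.

End Span.

Lemma indep_in_span_le {k m} {v : 'I_k -> V} {w : 'I_m -> V} :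
  indep w -> (forall i, span v (w i)) -> (m <= k)%N.
Proof.
(* The coordinate matrix of w in v is row-free, so its rank m is at most k. *)
move=> w_indep w_span.
have /choice[c cP] : forall i, exists c : 'I_k -> R, \sum_l c l *: v l = w i.
  by move=> i; case: (w_span i) => c _ e; exists c.
pose A := \matrix_(i < m, l < k) c i l.
have wA i : w i = \sum_l A i l *: v l.
  by rewrite -cP; apply: eq_bigr => l _; rewrite mxE.
suff : row_free A by rewrite /row_free => /eqP <-; exact: rank_leq_col.
apply: inj_row_free => a aA0; apply/rowP => i; rewrite mxE.
apply: (w_indep (fun i => a 0 i)) => {i}.
under eq_bigr do rewrite wA scaler_sumr.
rewrite exchange_big /= big1 // => l _.
transitivity ((a *m A) 0 l *: v l); last by rewrite aA0 mxE scale0r.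
by rewrite mxE scaler_suml; apply: eq_bigr => i _; rewrite scalerA.
Qed.

Definition extend {m} (u : 'I_m -> V) (s : V) : 'I_m.+1 -> V :=
  fun i => if unlift ord_max i is Some i' then u i' else s.

Lemma sum_extend m (c : 'I_m.+1 -> R) u s :
  \sum_(i < m.+1) c i *: extend u s i =
  \sum_(i < m) c (lift ord_max i) *: u i + c ord_max *: s.
Proof.
rewrite big_ord_recr /= /extend unlift_none; congr (_ + _); apply: eq_bigr => i _.
have -> : widen_ord (leqnSn m) i = lift ord_max i.
  by apply: val_inj; rewrite /= /bump leqNgt ltn_ord.
by rewrite liftK.
Qed.

Lemma indep_extend {m} {u : 'I_m -> V} {s} : indep u -> ~ span u s -> indep (extend u s).
Proof.
move=> u_indep s_notin c; rewrite sum_extend => c0.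
have cmax : c ord_max = 0.
  apply: contrapT => /eqP cmax_neq0; apply: s_notin.
  exists (fun i => - c (lift ord_max i) / c ord_max) => //.
  have sum_u : \sum_(i < m) c (lift ord_max i) *: u i = - (c ord_max *: s).
    by apply/eqP; rewrite -addr_eq0 c0.
  transitivity (- (c ord_max)^-1 *: \sum_(i < m) c (lift ord_max i) *: u i).
    rewrite scaler_sumr; apply: eq_bigr => i _.
    by rewrite scalerA mulrC mulNr mulrN.
  by rewrite sum_u scaleNr scalerN opprK scalerA mulVf // scale1r.
move: c0; rewrite cmax scale0r addr0 => /u_indep c0 i.
by case: (unliftP ord_max i) => [j ->|->].
Qed.

Lemma subspace_span_basis {k} (v : 'I_k -> V) (S : set V) :
  S 0 -> (forall x y, S x -> S y -> S (x + y)) -> (forall a x, S x -> S (a *: x)) ->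
  S `<=` span v -> exists m (u : 'I_m -> V), indep u /\ S = span u.
Proof.
move=> S0 SD SZ Sv.
pose P m := `[< exists u : 'I_m -> V, indep u /\ forall i, S (u i) >].
have P0 : exists m, P m.
  by exists 0%N; apply/asboolP; exists (fun _ => 0); split=> [? ? []|[]].
have P_bound m : P m -> (m <= k)%N.
  by move=> /asboolP [u [u_indep Su]]; apply: (indep_in_span_le u_indep) => i; exact/Sv/Su.
case: (ex_maxnP P0 P_bound) => m /asboolP [u [u_indep Su]] m_max.
exists m, u; split=> //; apply/seteqP; split => [s Ss|_ [c _ <-]]; last first.
  by elim/big_ind: _ => // i _; exact/SZ/Su.
apply: contrapT => s_notin.
have Sext i : S (extend u s i) by rewrite /extend; case: (unlift ord_max i).
have := m_max m.+1 (asboolT (ex_intro _ _ (conj (indep_extend u_indep s_notin) Sext))).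
by rewrite ltnn.
Qed.

Lemma span_sub_le {k k'} {v : 'I_k -> V} {w : 'I_k' -> V} :
  indep v -> span v `<=` span w -> (k <= k')%N.
Proof. by move=> v_indep vw; apply: (indep_in_span_le v_indep) => i; exact/vw/span_gen. Qed.

Lemma span_proper_lt {k k'} {v : 'I_k -> V} {w : 'I_k' -> V} :
  indep v -> span v `<=` span w -> span v <> span w -> (k < k')%N.
Proof.
move=> v_indep vw vneqw.
have [p [wp vp]] : exists p, span w p /\ ~ span v p.
  apply: contrapT => nop; apply: vneqw; apply/seteqP; split=> // p wp.
  by apply: contrapT => vp; apply: nop; exists p.
apply: (indep_in_span_le (indep_extend v_indep vp)) => i.
rewrite /extend; case: (unlift ord_max i) => [j|]; last exact: wp.
by apply: vw; exact: (span_gen v j).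
Qed.

Lemma spanI_basis {k k'} (v : 'I_k -> V) (w : 'I_k' -> V) :
  exists m (u : 'I_m -> V), indep u /\ span v `&` span w = span u.
Proof.
apply: (subspace_span_basis v) => [|x y [vx wx] [vy wy]|a x [vx wx]|x []//].
- by split; exact: span0.
- by split; exact: spanD.
- by split; exact: spanZ.
Qed.

Lemma translate_span_mem {k} {v : 'I_k -> V} {x z} :
  translate x (span v) z -> translate x (span v) = translate z (span v).
Proof.
case=> t vt <-; apply/seteqP; split => _ [u vu <-].
  by exists (u - t); [exact: spanB | rewrite addrACA subrr addr0].
by exists (t + u); [exact: spanD | rewrite addrA].
Qed.

Lemma translate_span_sub {k k'} {v : 'I_k -> V} {w : 'I_k' -> V} {x y} :
  translate x (span v) `<=` translate y (span w) -> span v `<=` span w.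
Proof.
move=> vw; have := vw x (ex_intro2 _ _ 0 (span0 v) (addr0 x)) => /translate_span_mem yx.
move=> u vu; have := vw (x + u) (ex_intro2 _ _ u vu erefl); rewrite yx.
by case=> u' wu' /addrI <-.
Qed.

Lemma translateI x (S1 S2 : set V) :
  translate x S1 `&` translate x S2 = translate x (S1 `&` S2).
Proof.
apply/seteqP; split=> [_ [[u1 S1u1 <-] [u2 S2u2 /addrI e]]|_ [u [S1u S2u] <-]].
  by exists u1 => //; split => //; rewrite -e.
by split; exists u.
Qed.

Lemma hyperplane_dim_le {k k'} {X Y : set V} :
  hyperplane_dim k X -> hyperplane_dim k' Y -> X `<=` Y -> (k <= k')%N.
Proof.
case=> x [_ [[v [v_indep ->]] ->]] [y [_ [[w [w_indep ->]] ->]]] XY.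
exact: span_sub_le v_indep (translate_span_sub XY).
Qed.

Lemma hyperplane_dim_proper_lt {k k'} {X Y : set V} :
  hyperplane_dim k X -> hyperplane_dim k' Y -> X `<=` Y -> X <> Y -> (k < k')%N.
Proof.
case=> x [_ [[v [v_indep ->]] ->]] [y [_ [[w [w_indep ->]] ->]]] XY XneY.
apply: span_proper_lt v_indep (translate_span_sub XY) _ => vw; apply: XneY.
have yx := translate_span_mem (XY x (ex_intro2 _ _ 0 (span0 v) (addr0 x))).
by rewrite -[RHS]/(translate y (span w)) yx -vw.
Qed.

Lemma hyperplane_neq0 {k} {X : set V} : hyperplane_dim k X -> X <> set0.
Proof.
case=> x [_ [[v [_ ->]] ->]] X0.
have : translate x (span v) x by exists 0; [exact: span0 | rewrite addr0].
by rewrite /translate /span X0.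
Qed.

Lemma hyperplane_setI {k k'} {X Y : set V} : hyperplane_dim k X -> hyperplane_dim k' Y ->
  X `&` Y = set0 \/ exists m, hyperplane_dim m (X `&` Y).
Proof.
case=> x [_ [[v [_ ->]] ->]] [y [_ [[w [_ ->]] ->]]].
have [[z [zx zy]]|disj] := pselect (exists z, (translate x (span v) `&` translate y (span w)) z).
  right; rewrite -/(translate x _) -/(translate y _).
  rewrite (translate_span_mem zx) (translate_span_mem zy) translateI.
  have [m [u [u_indep ->]]] := spanI_basis v w.
  by exists m, z, (span u); split; [exists u|].
by left; apply/seteqP; split => // z Xz; apply: disj; exists z.
Qed.

Definition subspace (X : set V) := exists k, subspace_dim k X.

Lemma subspace_setI X Y : subspace X -> subspace Y -> subspace (X `&` Y).
Proof.
case=> k [v [_ ->]] [k' [w [_ ->]]]; have [m [u [u_indep uE]]] := spanI_basis v w.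
by exists m, u; split.
Qed.

Lemma subspace_hyperplane {k} {X : set V} : subspace_dim k X -> hyperplane_dim k X.
Proof.
move=> Xk; exists 0, X; split => //; apply/seteqP; split => [x Xx|_ [u Xu <-]].
  by exists x => //; rewrite add0r.
by rewrite add0r.
Qed.

End Flats.

Lemma sigma_algebra_setring {T : Type} {B : set (set T)} :
  sigma_algebra setT B -> setring B.
Proof.
case=> B0 BC Bcup; have BU X Y : B X -> B Y -> B (X `|` Y).
  by move=> BX BY; rewrite -bigcup2E; apply: Bcup => -[|[|n]].
split=> // X Y BX BY; rewrite setDE -[X]setCK -setCU -setTD.
by apply/BC/BU => //; rewrite -setTD; exact: BC.
Qed.

Lemma probability_content {R : realType} {T : Type} {B : set (set T)} {Q : set T -> R} :
  probability_on B Q -> is_content B Q.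
Proof.
case=> [[B0 _ _] Q_ge0 Q0 _ Q_cvg]; split=> // A C BA BC AC0.
have B2 n : B (bigcup2 A C n) by case: n => [|[|n]].
have := Q_cvg _ B2; rewrite -trivIset_bigcup2 bigcup2E => /(_ AC0) Q_lim.
suff lim2 : (fun n => \sum_(k < n) Q (bigcup2 A C k)) @ \oo --> Q A + Q C.
  exact: (cvg_unique _ Q_lim lim2).
apply: cvg_near_cst; exists 2%N => // n /= n2.
rewrite -(subnKC n2) big_split_ord !big_ord_recr !big_ord0 /= big1 ?addr0 ?add0r //.
Qed.

Section AffineRank.
Context {R : realType} {V : lmodType R}.

Definition flat (X : set V) := X = set0 \/ exists k, hyperplane_dim k X.

(* The empty set has dimension -1, so ranks are dimensions shifted by one. *)
Definition affine_rank (X : set V) : nat :=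
  if pselect (exists k, hyperplane_dim k X) is left e then (projT1 (cid e)).+1 else 0.

Lemma affine_rankE {k} {X : set V} : hyperplane_dim k X -> affine_rank X = k.+1.
Proof.
move=> Xk; rewrite /affine_rank; case: pselect => [e|]; last by case; exists k.
case: (cid e) => k' Xk' /=; congr _.+1; apply/eqP; rewrite eqn_leq.
by rewrite (hyperplane_dim_le Xk' Xk) ?(hyperplane_dim_le Xk Xk').
Qed.

Lemma affine_rank0 : affine_rank set0 = 0%N.
Proof.
rewrite /affine_rank; case: pselect => [e|//]; exfalso.
by case: e => k /hyperplane_neq0.
Qed.

Lemma flat_setI X Y : flat X -> flat Y -> flat (X `&` Y).
Proof.
case=> [->|[k Xk]]; first by left; rewrite set0I.
case=> [->|[k' Yk']]; first by left; rewrite setI0.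
exact: hyperplane_setI Xk Yk'.
Qed.

Lemma flat_rank_lt X Y : flat X -> flat Y -> X `<=` Y -> X <> Y ->
  (affine_rank X < affine_rank Y)%N.
Proof.
move=> FX [Y0|[k' Yk']] XY XneY.
  by exfalso; apply: XneY; rewrite Y0; apply/seteqP; split=> // x /XY; rewrite Y0.
rewrite (affine_rankE Yk'); case: FX => [->|[k Xk]]; first by rewrite affine_rank0.
by rewrite (affine_rankE Xk) ltnS; exact: hyperplane_dim_proper_lt Xk Yk' XY XneY.
Qed.

Lemma subspace_rank_lt X Y : subspace X -> subspace Y -> X `<=` Y -> X <> Y ->
  (affine_rank X < affine_rank Y)%N.
Proof.
case=> k /subspace_hyperplane Xk [k' /subspace_hyperplane Yk'].
by apply: flat_rank_lt; right; [exists k | exists k'].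
Qed.

Lemma flat_rank_dim_lt j F : flat F -> (affine_rank F < j.+1)%N -> hyperplane_dim_lt j F.
Proof.
case=> [F0 _|[k Fk]]; first by left.
by rewrite (affine_rankE Fk) => rkF; right; exists k.
Qed.

Lemma subspace_rank_dim_lt j F : subspace F -> (affine_rank F < j.+1)%N -> subspace_dim_lt j F.
Proof.
case=> k Fk; rewrite (affine_rankE (subspace_hyperplane Fk)) => rkF.
by exists k.
Qed.

End AffineRank.

Theorem lemma9 (R : realType) (V : lmodType R) (B : set (set V))
    (Q : set V -> R) :
  probability_on B Q ->
  (forall (j : nat) (H : set V), hyperplane_dim j H -> B H) ->
  (forall (j : nat) (C : nat -> set V),
     (forall i, hyperplane_dim j (C i)) -> injective C ->
     (forall l : R, (fun i => Q (C i)) @ \oo --> l ->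
            exists F : set V, [/\ hyperplane_dim_lt j F,
                                 infinitely_often (fun i => F `<=` C i) &
                                 l = Q F]) /\
     ~ (forall i, Q (C i) < Q (C i.+1))) /\
  (forall (j : nat) (C : nat -> set V),
     (forall i, subspace_dim j (C i)) -> injective C ->
     (forall l : R, (fun i => Q (C i)) @ \oo --> l ->
        exists F : set V, [/\ subspace_dim_lt j F,
                             infinitely_often (fun i => F `<=` C i) &
                             l = Q F]) /\
     ~ (forall i, Q (C i) < Q (C i.+1))).
Proof.
move=> Q_prob B_hyp; have Q_content := probability_content Q_prob.
have [sigmaB _ _ _ _] := Q_prob; have ringB := sigma_algebra_setring sigmaB.
have BT : B setT by case: sigmaB => B0 BC _; have := BC set0 B0; rewrite setD0.
have B_flat X : flat X -> B X by case=> [->|[k /B_hyp]]; [case: ringB|].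
have B_sub X : subspace X -> B X by case=> k /subspace_hyperplane /B_hyp.
split=> j C C_dim injC.
- have FC i : flat (C i) by right; exists j.
  have rkC i : (affine_rank (C i) <= j.+1)%N by rewrite (affine_rankE (C_dim i)).
  split; last exact: (content_not_strictly_increasing ringB BT B_flat flat_setI flat_rank_lt
    Q_content FC rkC injC).
  move=> l /(cvg_content_attained ringB BT B_flat flat_setI flat_rank_lt Q_content FC rkC injC).
  by case=> F [FF rkF ioF lF]; exists F; split=> //; exact: flat_rank_dim_lt.
- have SC i : subspace (C i) by exists j.
  have rkC i : (affine_rank (C i) <= j.+1)%N.
    by rewrite (affine_rankE (subspace_hyperplane (C_dim i))).
  split; last exact: (content_not_strictly_increasing ringB BT B_sub subspace_setI
    subspace_rank_lt Q_content SC rkC injC).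
  move=> l /(cvg_content_attained ringB BT B_sub subspace_setI subspace_rank_lt Q_content SC
    rkC injC).
  by case=> F [SF rkF ioF lF]; exists F; split=> //; exact: subspace_rank_dim_lt.
Qed.
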